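(* Let $X$ be a Banach lattice and let $S$ be a singular functional on $X$. Then $$\|S\|_{X^*}=\sup\left\{\frac{S(f)}{\operatorname{dist}_X(f,X_a)}: f\in X\setminus X_a,\ \|f\|_X=1\right\}.$$
   Context: $X^*$ is the topological dual of $X$. For a Banach lattice $X$, an element $x$ is order continuous if for every sequence $0\le x_n\le|x|$ with $x_n\downarrow0$ one has $\|x_n\|\to0$; $X_a$ is the closed ideal of order continuous elements. A singular functional is an $S\in X^*$ with $S(x)=0$ for all $x\in X_a$. $\operatorname{dist}_X(f,X_a)=\inf\{\|f-g\|_X:g\in X_a\}$. *)

From HB Require Import structures.
From mathcomp Require Import all_boot all_order all_algebra.
From mathcomp Require Import all_classical all_reals all_analysis.
Set Implicit Arguments. Unset Strict Implicit. Unset Printing Implicit Defensive.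
Import Order.TTheory GRing.Theory Num.Theory.
Import numFieldNormedType.Exports.
Local Open Scope classical_set_scope.
Local Open Scope ring_scope.

Section BanachLattice.
Variables (R : realType) (X : completeNormedModType R) (le : X -> X -> Prop).

Definition is_lub (A : set X) (s : X) : Prop :=
  (forall a, A a -> le a s) /\ (forall u, (forall a, A a -> le a u) -> le s u).

Definition is_glb (A : set X) (i : X) : Prop :=
  (forall a, A a -> le i a) /\ (forall l, (forall a, A a -> le l a) -> le l i).

Definition is_abs (x a : X) : Prop := is_lub [set x; - x] a.

Definition banach_lattice : Prop :=
  (forall x, le x x) /\
  (forall x y, le x y -> le y x -> x = y) /\
  (forall x y z, le x y -> le y z -> le x z) /\
  (forall x y z, le x y -> le (x + z) (y + z)) /\
  (forall (a : R) x y, 0 <= a -> le x y -> le (a *: x) (a *: y)) /\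
  (forall x y, exists s, is_lub [set x; y] s) /\
  (forall x y ax ay, is_abs x ax -> is_abs y ay -> le ax ay ->
      `|x| <= `|y|).

Definition decr_to_zero (u : nat -> X) : Prop :=
  (forall n, le (u n.+1) (u n)) /\ is_glb (range u) 0.

Definition order_continuous (x : X) : Prop :=
  forall ax, is_abs x ax ->
  forall u : nat -> X, (forall n, le 0 (u n) /\ le (u n) ax) ->
    decr_to_zero u -> (fun n => `|u n|) @ \oo --> (0 : R).

Definition Xa : set X := [set x | order_continuous x].

Definition dist_Xa (f : X) : R := inf [set `|f - g| | g in Xa].

End BanachLattice.

Definition is_bounded_functional (R : realType) (X : normedModType R)
  (S : X -> R) : Prop :=
  (forall (a : R) (x y : X), S (a *: x + y) = a * S x + S y) /\ continuous S.

Definition dual_norm (R : realType) (X : normedModType R) (S : X -> R) : R :=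
  sup [set `|S x| | x in [set x : X | `|x| <= 1]].

From HB Require Import structures.
From mathcomp Require Import all_boot all_order all_algebra.
From mathcomp Require Import all_classical all_reals all_analysis.
Import Order.TTheory GRing.Theory Num.Theory.
Import numFieldNormedType.Exports.
Local Open Scope classical_set_scope.
Local Open Scope ring_scope.

(* Nothing about the lattice structure is needed beyond 0 \in X_a: the
   identity holds for every continuous linear functional S vanishing on a set
   D containing 0.  Writing S f = S (f - g) for g \in D gives
   S f <= ||S|| dist(f, D), hence every ratio is at most ||S||.  Conversely,
   for S x <> 0 the unit vector f = sg(S x) x / ||x|| lies outside D, and
   dist(f, D) <= ||f - 0|| = 1, so S f / dist(f, D) >= S f = |S x| / ||x||. *)

Lemma linear_fun_exists (R : realType) (X : lmodType R) (S : X -> R) :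
  (forall (a : R) (x y : X), S (a *: x + y) = a * S x + S y) ->
  exists f : {linear X -> R}, S = f.
Proof.
by move=> S_linear; exists (HB.pack_for {linear X -> R} S
  (GRing.isLinear.Build _ _ _ _ S S_linear)).
Qed.

Lemma sup_ge0 (R : realType) (A : set R) :
  (forall a, A a -> exists2 b, A b & 0 <= b) -> 0 <= sup A.
Proof.
move=> A_nonneg; have [supA|/sup_out-> //] := pselect (has_sup A).
have [a Aa] := supA.1; have [b Ab b_ge0] := A_nonneg a Aa.
exact: le_trans b_ge0 (sup_upper_bound supA Ab).
Qed.

Section DualNorm.
Context {R : realType} {X : normedModType R} {f : {linear X -> R}}.

Lemma dual_norm_ge0 : 0 <= dual_norm f.
Proof. by apply: sup_ge0 => _ [x x_le1 _]; exists `|f x| => //; exists x. Qed.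

Hypothesis f_cont : continuous f.

Lemma has_sup_dual_norm : has_sup [set `|f x| | x in [set x : X | `|x| <= 1]].
Proof.
split; first by exists `|f 0|, 0 => //=; rewrite normr0.
have /linear_boundedP/pinfty_ex_gt0[r r_gt0 fr] :=
  continuous_linear_bounded 0 (f_cont 0).
exists r => _ [x /= x_le1 <-]; apply: le_trans (fr x) _.
exact: ler_piMr (ltW r_gt0) x_le1.
Qed.

Lemma norm_le_dual_norm x : `|f x| <= dual_norm f * `|x|.
Proof.
have [->|x_neq0] := eqVneq x 0; first by rewrite linear0 !normr0 mulr0.
have x_gt0 : 0 < `|x| by rewrite normr_gt0.
have : `|f (`|x|^-1 *: x)| <= dual_norm f.
  apply: (sup_upper_bound has_sup_dual_norm).
  by exists (`|x|^-1 *: x) => //=; rewrite normrZ normfV normr_id mulVf ?gt_eqF.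
by rewrite linearZ normrM normfV normr_id ler_pdivrMl // mulrC.
Qed.

End DualNorm.

Section SetDistance.
Context {R : realType} {X : normedModType R}.

Definition set_dist (D : set X) (x : X) : R := inf [set `|x - g| | g in D].

Context {D : set X} {x : X}.
Hypothesis D0 : D 0.

Lemma set_dist_ge0 : 0 <= set_dist D x.
Proof. by apply: lb_le_inf => [|_ [g _ <-]]; first by exists `|x - 0|, 0. Qed.

Lemma set_dist_le_norm : set_dist D x <= `|x|.
Proof.
rewrite -{2}(subr0 x); apply: ge_inf; last by exists 0.
by exists 0 => _ [g _ <-].
Qed.

End SetDistance.

Section VanishingFunctional.
Context {R : realType} {X : normedModType R} {D : set X} {f : {linear X -> R}}.
Hypotheses (D0 : D 0) (f_cont : continuous f) (f_vanish : forall g, D g -> f g = 0).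

Lemma le_dual_norm_set_dist x : f x <= dual_norm f * set_dist D x.
Proof.
have := dual_norm_ge0 (f := f); rewrite [0 <= _]le_eqVlt => /predU1P[N0|N_gt0].
  have := norm_le_dual_norm f_cont x; rewrite -N0 !mul0r.
  exact: le_trans (ler_norm _).
rewrite -ler_pdivrMl //; apply: lb_le_inf => [|_ [g Dg <-]].
  by exists `|x - 0|, 0.
rewrite ler_pdivrMl // -[f x]subr0 -(f_vanish _ Dg) -linearB.
exact: le_trans (ler_norm _) (norm_le_dual_norm f_cont _).
Qed.

Let ratios := [set f x / set_dist D x | x in [set x | ~ D x /\ `|x| = 1]].

Lemma ubound_ratios : ubound ratios (dual_norm f).
Proof.
move=> _ [x _ <-].
have := set_dist_ge0 (x := x) D0; rewrite [0 <= _]le_eqVlt => /predU1P[d0|d_gt0].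
  by rewrite -d0 invr0 mulr0 dual_norm_ge0.
by rewrite ler_pdivrMr //; exact: le_dual_norm_set_dist.
Qed.

Lemma ratios_norming {x : X} :
  `|x| <= 1 -> f x != 0 -> exists2 b, ratios b & `|f x| <= b.
Proof.
move=> x_le1 fx_neq0; have x_gt0 : 0 < `|x|.
  by rewrite normr_gt0; apply: contraNneq fx_neq0 => ->; rewrite linear0.
pose y := (`|x|^-1 * Num.sg (f x)) *: x.
have fy : f y = `|f x| / `|x|.
  by rewrite linearZ /= -scalerA -[_ *: f x]/(_ * f x) -normrEsg mulrC.
have fy_gt0 : 0 < f y by rewrite fy divr_gt0 // normr_gt0.
have y1 : `|y| = 1.
  by rewrite normrZ normrM normr_sg fx_neq0 mulr1 normfV normr_id mulVf ?gt_eqF.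
have Dy : ~ D y by move=> /f_vanish; apply/eqP; rewrite gt_eqF.
have d_gt0 : 0 < set_dist D y.
  rewrite lt_neqAle (set_dist_ge0 D0) andbT; apply/eqP => d0.
  by move: (le_dual_norm_set_dist y); rewrite -d0 mulr0 leNgt fy_gt0.
exists (f y / set_dist D y); first by exists y.
have fx_le_fy : `|f x| <= f y by rewrite fy ler_pdivlMr //; exact: ler_piMr.
apply: le_trans fx_le_fy _; rewrite ler_pdivlMr //; apply: ler_piMr (ltW fy_gt0) _.
by rewrite -y1 set_dist_le_norm.
Qed.

Lemma sup_ratios_ge0 : 0 <= sup ratios.
Proof.
apply: sup_ge0 => _ [x Px _]; have [fx0|fx_neq0] := eqVneq (f x) 0.
  by exists (f x / set_dist D x); [exists x | rewrite fx0 mul0r].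
have x_le1 : `|x| <= 1 by rewrite Px.2.
have [b Rb fx_le_b] := ratios_norming x_le1 fx_neq0.
by exists b => //; apply: le_trans fx_le_b.
Qed.

Theorem dual_norm_vanishing : dual_norm f = sup ratios.
Proof.
apply/eqP; rewrite eq_le; apply/andP; split.
  apply: ge_sup; first by exists `|f 0|, 0 => //=; rewrite normr0.
  move=> _ [x /= x_le1 <-]; have [->|fx_neq0] := eqVneq (f x) 0.
    by rewrite normr0 sup_ratios_ge0.
  have [b Rb fx_le_b] := ratios_norming x_le1 fx_neq0.
  have has_sup_ratios : has_sup ratios.
    by split; [exists b | exists (dual_norm f); exact: ubound_ratios].
  exact: le_trans fx_le_b (sup_upper_bound has_sup_ratios Rb).
have [->|/set0P ratios_n0] := eqVneq ratios set0; first by rewrite sup0 dual_norm_ge0.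
exact: ge_sup ubound_ratios.
Qed.

End VanishingFunctional.

Lemma order_continuous0 {R : realType} {X : completeNormedModType R}
    {le : X -> X -> Prop} :
  (forall x, le x x) -> (forall x y, le x y -> le y x -> x = y) ->
  order_continuous le 0.
Proof.
move=> le_refl le_anti a [a_ub a_lub] u u_between _.
have a0 : a = 0.
  apply: le_anti; last by apply: a_ub; left.
  by apply: a_lub => _ [->|->]; rewrite ?oppr0.
have u0 n : u n = 0.
  by have [u_ge0] := u_between n; rewrite a0 => u_le0; apply: le_anti.
rewrite (_ : (fun n => `|u n|) = fun=> 0); first exact: cvg_cst.
by apply/funext => n; rewrite u0 normr0.
Qed.

Theorem lemma2p2 (R : realType) (X : completeNormedModType R)
  (le : X -> X -> Prop) (S : X -> R) :
  banach_lattice le ->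
  is_bounded_functional S ->
  (forall x, Xa le x -> S x = 0) ->
  dual_norm S =
  sup [set S f / dist_Xa le f | f in [set f : X | ~ Xa le f /\ `|f| = 1]].
Proof.
move=> [le_refl [le_anti _]] [/linear_fun_exists[f ->] f_cont] S_singular.
exact: (dual_norm_vanishing (D := Xa le)) (order_continuous0 le_refl le_anti)
  f_cont S_singular.
Qed.
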